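(* Let $E$ be a set, let $\Sigma^{(0)}_E$ be the group of permutations of $E$ fixing all but finitely many elements of $E$, and let $\Sigma_E$ be the set of virtual permutations of $E$. For every $g \in \Sigma^{(0)}_E$ and every $\sigma = (\sigma_I)_{I \in \mathcal{F}(E)} \in \Sigma_E$, there exists a unique virtual permutation $g\sigma g^{-1} = (\sigma'_I)_{I \in \mathcal{F}(E)} \in \Sigma_E$ such that $\sigma'_I = g_I \sigma_I g_I^{-1}$ for every finite $I \subset E$ containing all points of $E$ not fixed by $g$, where $g_I$ denotes the restriction of $g$ to $I$. The map $(g,\sigma) \mapsto g\sigma g^{-1}$ is a group action of $\Sigma^{(0)}_E$ on $\Sigma_E$, and the cycles of $g\sigma g^{-1}$ are the images by $g$ of the cycles of $\sigma$.
   Context: $\mathcal{F}(E)$ denotes the set of finite subsets of $E$, $\Sigma_I$ the symmetric group of a finite set $I$. For finite $I \subset J$ and $\tau \in \Sigma_J$, $\pi_{J,I}(\tau) \in \Sigma_I$ (''removing the elements of $J\setminus I$ from the cycle structure of $\tau$'') is defined by $\pi_{J,I}(\tau)(x) = \tau^m(x)$ with $m\geq 1$ minimal such that $\tau^m(x) \in I$. A virtual permutation of $E$ is a family $(\sigma_I)_{I \in \mathcal{F}(E)}$ with $\sigma_I \in \Sigma_I$ and $\sigma_I = \pi_{J,I}(\sigma_J)$ for all finite $I \subset J$. For a virtual permutation $\sigma$, two elements $x,y \in E$ are equivalent if they lie in the same cycle of $\sigma_I$ for some (equivalently, every) finite $I$ containing both; the equivalence classes are called the cycles of $\sigma$. 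*)

From HB Require Import structures.
From mathcomp Require Import all_boot.
From mathcomp Require Import finmap.
Set Implicit Arguments. Unset Strict Implicit. Unset Printing Implicit Defensive.
Local Open Scope fset_scope.

Section VirtualPerm.
Variable E : choiceType.

(* An element of Sigma_I (I finite) is represented by its canonical extension
   to E: a map E -> E inducing a bijection of I and fixing every point outside I. *)
Definition is_perm_on (I : {fset E}) (s : E -> E) : Prop :=
  [/\ (forall x, x \in I -> s x \in I),
      (forall x y, x \in I -> y \in I -> s x = s y -> x = y),
      (forall y, y \in I -> exists2 x, x \in I & s x = y)
    & (forall x, x \notin I -> s x = x)].

Definition is_proj (I : {fset E}) (t s : E -> E) : Prop :=
  forall x, x \in I ->
    exists m, [/\ 0 < m, iter m t x \in I,
                  (forall k, 0 < k < m -> iter k t x \notin I)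
                & s x = iter m t x].

Definition virtual_perm (sigma : {fset E} -> E -> E) : Prop :=
  (forall I, is_perm_on I (sigma I)) /\
  (forall I J, I `<=` J -> is_proj I (sigma J) (sigma I)).

Definition fixes_outside (g : E -> E) (S : {fset E}) : Prop :=
  forall x, x \notin S -> g x = x.

Definition finitary_perm (g : E -> E) : Prop :=
  bijective g /\ exists S : {fset E}, fixes_outside g S.

(* sigma'_I = g_I sigma_I g_I^{-1} for every finite I containing all points
   not fixed by g (written as sigma'_I o g_I = g_I o sigma_I on I; both sides
   are the identity outside I). *)
Definition conj_spec (g : E -> E) (sigma sigma' : {fset E} -> E -> E) : Prop :=
  forall I : {fset E}, fixes_outside g I ->
    forall x, x \in I -> sigma' I (g x) = g (sigma I x).

Definition same_cycle (sigma : {fset E} -> E -> E) (x y : E) : Prop :=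
  exists I : {fset E}, [/\ x \in I, y \in I & exists n, iter n (sigma I) x = y].

Definition is_cycle (sigma : {fset E} -> E -> E) (C : E -> Prop) : Prop :=
  exists x, C = same_cycle sigma x.

Definition img_set (g : E -> E) (D : E -> Prop) : E -> Prop :=
  fun z => exists2 y, D y & z = g y.

End VirtualPerm.

From HB Require Import structures.
From mathcomp Require Import all_boot.
From mathcomp Require Import finmap.
From Stdlib Require Import FunctionalExtensionality PropExtensionality.

(* For a bijection g with inverse g', the family I |-> g o sigma_{g'(I)} o g'
   is a virtual permutation, finite support or not, and it has the defining
   property of g sigma g^-1 because g'(I) = I whenever g fixes every point
   outside I.  Conjugation carries the sigma_K-orbits to orbits at g(K), so
   cycles are transported by g, and the action laws reduce to the identities
   id(I) = I and (g o h)'(I) = h'(g'(I)).  Finite support is needed for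
   uniqueness only: a virtual permutation is determined by its components on
   the finite sets containing the support S of g, since sigma_I is the
   projection of sigma_{I u S}. *)

Set Implicit Arguments. Unset Strict Implicit. Unset Printing Implicit Defensive.

Local Open Scope fset_scope.

Section VirtualPermConj.
Variable E : choiceType.
Implicit Types (I J S : {fset E}) (g : E -> E) (sigma tau : {fset E} -> E -> E).

Lemma mem_fixes_outside g S x :
  injective g -> fixes_outside g S -> (g x \in S) = (x \in S).
Proof.
move=> g_inj gS; apply/idP/idP => [gxS|xS]; apply/negPn/negP => xNS.
  by move: gxS; rewrite gS // (negbTE xNS).
by have /g_inj gxx := gS _ xNS; move: xNS; rewrite gxx xS.
Qed.

Lemma proj_unique I t s1 s2 :
  is_proj I t s1 -> is_proj I t s2 -> {in I, s1 =1 s2}.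
Proof.
move=> proj1 proj2 x xI.
have [m1 [m1_gt0 m1I before1 ->]] := proj1 x xI.
have [m2 [m2_gt0 m2I before2 ->]] := proj2 x xI.
case: (ltngtP m1 m2) => [lt12|lt21|-> //].
- by have := before2 m1; rewrite m1_gt0 lt12 m1I => /(_ isT).
- by have := before1 m2; rewrite m2_gt0 lt21 m2I => /(_ isT).
Qed.

Lemma virtual_perm_eq S sigma tau :
  virtual_perm sigma -> virtual_perm tau ->
  (forall J, S `<=` J -> {in J, sigma J =1 tau J}) -> sigma = tau.
Proof.
move=> [sigma_perm sigma_proj] [tau_perm tau_proj] agree.
apply: functional_extensionality => I; apply: functional_extensionality => x.
have [sI _ _ sI_id] := sigma_perm I; have [tI _ _ tI_id] := tau_perm I.
have [xI|xNI] := boolP (x \in I); last by rewrite sI_id // tI_id.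
have eqIS : sigma (I `|` S) = tau (I `|` S).
  have [_ _ _ sIS_id] := sigma_perm (I `|` S).
  have [_ _ _ tIS_id] := tau_perm (I `|` S).
  apply: functional_extensionality => y.
  have [yIS|yNIS] := boolP (y \in I `|` S); last by rewrite sIS_id // tIS_id.
  exact: agree (fsubsetUr I S) y yIS.
apply: proj_unique xI; first exact: sigma_proj (fsubsetUl I S).
by rewrite eqIS; apply: tau_proj (fsubsetUl I S).
Qed.

Lemma conj_spec_unique g S sigma tau1 tau2 :
  bijective g -> fixes_outside g S ->
  virtual_perm tau1 -> conj_spec g sigma tau1 ->
  virtual_perm tau2 -> conj_spec g sigma tau2 -> tau1 = tau2.
Proof.
move=> [g' gK g'K] gS v1 spec1 v2 spec2.
apply: (virtual_perm_eq (S := S)) => // J SJ y yJ.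
have gJ : fixes_outside g J.
  by move=> x xNJ; apply: gS; apply: contra xNJ; apply: (fsubsetP SJ).
have g'yJ : g' y \in J by rewrite -(mem_fixes_outside _ (can_inj gK) gJ) g'K.
by rewrite -{1 2}(g'K y) spec1 // spec2.
Qed.

Section Conjugation.
Variables (g g' : E -> E).
Hypotheses (gK : cancel g g') (g'K : cancel g' g).

Definition conj_vperm sigma : {fset E} -> E -> E :=
  fun I x => g (sigma (g' @` I) (g' x)).

Lemma mem_imfset_inv I y : (y \in g' @` I) = (g y \in I).
Proof. by rewrite -{1}(gK y) mem_imfset //; apply: can_inj g'K. Qed.

Lemma iter_conj_vperm sigma I n x :
  iter n (conj_vperm sigma I) x = g (iter n (sigma (g' @` I)) (g' x)).
Proof. by elim: n => [|n IHn] /=; rewrite ?g'K // IHn /conj_vperm gK. Qed.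

Lemma conj_vperm_virtual sigma :
  virtual_perm sigma -> virtual_perm (conj_vperm sigma).
Proof.
move=> [sigma_perm sigma_proj]; split.
- move=> I; have [into inj onto fixed] := sigma_perm (g' @` I).
  split; rewrite /conj_vperm.
  + by move=> x xI; rewrite -mem_imfset_inv into // mem_imfset_inv g'K.
  + move=> x y xI yI /(can_inj gK) /inj.
    by rewrite !mem_imfset_inv !g'K => /(_ xI yI) /(can_inj g'K).
  + move=> y yI; have [z zI sz] : exists2 z, z \in g' @` I & sigma (g' @` I) z = g' y.
      by apply: onto; rewrite mem_imfset_inv g'K.
    by exists (g z); rewrite ?gK ?sz ?g'K // -mem_imfset_inv.
  + by move=> x xNI; rewrite fixed ?g'K // mem_imfset_inv g'K.
- move=> I J IJ x xI.
  have sub : g' @` I `<=` g' @` J.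
    by apply/fsubsetP => y; rewrite !mem_imfset_inv; apply: (fsubsetP IJ).
  have g'xI : g' x \in g' @` I by rewrite mem_imfset_inv g'K.
  have [m [m_gt0 mI before sI]] := sigma_proj _ _ sub _ g'xI.
  exists m; rewrite iter_conj_vperm -mem_imfset_inv; split => //.
  - by move=> k k_bound; rewrite iter_conj_vperm -mem_imfset_inv before.
  - by rewrite /conj_vperm sI.
Qed.

Lemma imfset_inv_fixes_outside I : fixes_outside g I -> g' @` I = I.
Proof.
move=> gI; apply/fsetP => y.
by rewrite mem_imfset_inv (mem_fixes_outside _ (can_inj gK) gI).
Qed.

Lemma conj_vperm_spec sigma : conj_spec g sigma (conj_vperm sigma).
Proof. by move=> I gI x _; rewrite /conj_vperm gK imfset_inv_fixes_outside. Qed.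

Lemma same_cycle_conj_vperm sigma a b :
  same_cycle (conj_vperm sigma) a b <-> same_cycle sigma (g' a) (g' b).
Proof.
split=> [[I [aI bI [n orbit]]]|[K [aK bK [n orbit]]]].
  exists (g' @` I); rewrite !mem_imfset_inv !g'K; split => //.
  by exists n; rewrite -(g'K b) -orbit iter_conj_vperm gK.
have mem_gK y : (y \in g @` K) = (g' y \in K).
  by rewrite -{1}(g'K y) mem_imfset //; apply: can_inj gK.
have g'gK : g' @` (g @` K) = K by apply/fsetP => y; rewrite mem_imfset_inv mem_gK gK.
exists (g @` K); rewrite !mem_gK; split => //.
by exists n; rewrite iter_conj_vperm g'gK orbit g'K.
Qed.

Lemma is_cycle_conj_vperm sigma C :
  is_cycle (conj_vperm sigma) C <-> exists2 D, is_cycle sigma D & C = img_set g D.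
Proof.
have cycle_img x : same_cycle (conj_vperm sigma) x = img_set g (same_cycle sigma (g' x)).
  apply: functional_extensionality => z; apply: propositional_extensionality.
  rewrite same_cycle_conj_vperm; split => [orbit|[y orbit ->]].
    by exists (g' z); rewrite ?g'K.
  by rewrite gK.
split=> [[x ->]|[D [y ->] ->]].
  by exists (same_cycle sigma (g' x)); [exists (g' x)|].
by exists (g y); rewrite cycle_img gK.
Qed.

End Conjugation.

Lemma conj_vperm_id sigma : conj_vperm id id sigma = sigma.
Proof. by rewrite /conj_vperm; do 2!apply: functional_extensionality => ?; rewrite imfset_id. Qed.

Lemma conj_vperm_comp g g' h h' sigma :
  conj_vperm (g \o h) (h' \o g') sigma = conj_vperm g g' (conj_vperm h h' sigma).
Proof. by rewrite /conj_vperm; do 2!apply: functional_extensionality => ?; rewrite imfset_comp. Qed.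

Lemma conj_specE g g' S sigma tau :
  cancel g g' -> cancel g' g -> fixes_outside g S ->
  virtual_perm sigma -> virtual_perm tau -> conj_spec g sigma tau ->
  tau = conj_vperm g g' sigma.
Proof.
move=> gK g'K gS vsigma vtau tau_spec.
apply: conj_spec_unique (Bijective gK g'K) gS vtau tau_spec _ _.
  exact: conj_vperm_virtual.
exact: conj_vperm_spec.
Qed.

Lemma finitary_perm_id : finitary_perm (@id E).
Proof. by split; [exists id|exists fset0]. Qed.

Lemma finitary_perm_comp g h :
  finitary_perm g -> finitary_perm h -> finitary_perm (g \o h).
Proof.
move=> [g_bij [Sg gS]] [h_bij [Sh hS]]; split; first exact: bij_comp.
by exists (Sg `|` Sh) => x; rewrite in_fsetU negb_or => /andP[xg xh] /=; rewrite hS ?gS.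
Qed.

End VirtualPermConj.

Theorem proposition2p6 (E : choiceType) :
  (forall (g : E -> E) (sigma : {fset E} -> E -> E),
      finitary_perm g -> virtual_perm sigma ->
      exists sigma', (virtual_perm sigma' /\ conj_spec g sigma sigma') /\
        forall sigma'', virtual_perm sigma'' /\ conj_spec g sigma sigma'' ->
                        sigma'' = sigma') /\
  (forall act : (E -> E) -> ({fset E} -> E -> E) -> ({fset E} -> E -> E),
      (forall g sigma, finitary_perm g -> virtual_perm sigma ->
         virtual_perm (act g sigma) /\ conj_spec g sigma (act g sigma)) ->
      [/\ (forall sigma, virtual_perm sigma -> act id sigma = sigma),
          (forall g h sigma, finitary_perm g -> finitary_perm h -> virtual_perm sigma ->
             act (g \o h) sigma = act g (act h sigma))
        & (forall g sigma, finitary_perm g -> virtual_perm sigma ->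
             forall C : E -> Prop,
               is_cycle (act g sigma) C <->
               exists2 D, is_cycle sigma D & C = img_set g D)]).
Proof.
split=> [g sigma [[g' gK g'K] [S gS]] vsigma|act act_spec].
  exists (conj_vperm g g' sigma); split=> [|tau [vtau tau_spec]].
    by split; [apply: conj_vperm_virtual|apply: conj_vperm_spec].
  exact: conj_specE gS vsigma vtau tau_spec.
have actE g g' sigma : cancel g g' -> cancel g' g -> finitary_perm g ->
    virtual_perm sigma -> act g sigma = conj_vperm g g' sigma.
  move=> gK g'K fg vsigma; have [_ [S gS]] := fg.
  by have [vact act_conj] := act_spec _ _ fg vsigma; apply: conj_specE gS _ _ _.
split=> [sigma vsigma|g h sigma fg fh vsigma|g sigma fg vsigma C].
- by rewrite (actE _ id) ?conj_vperm_id //; apply: finitary_perm_id.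
- have [[[g' gK g'K] _] [[h' hK h'K] _]] := (fg, fh).
  have [vact _] := act_spec _ _ fh vsigma.
  have fgh := finitary_perm_comp fg fh.
  rewrite (actE _ _ _ (can_comp gK hK) (can_comp h'K g'K) fgh vsigma) conj_vperm_comp.
  by rewrite -(actE _ _ _ hK h'K fh vsigma) -(actE _ _ _ gK g'K fg vact).
- have [[g' gK g'K] _] := fg.
  by rewrite (actE _ g') //; apply: is_cycle_conj_vperm.
Qed.
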